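(* Let $d\in\{1,2,3,7,11\}$, $K=\mathbb{Q}(\sqrt{-d})$, $\mathcal{O}_d$ its ring of integers, $\Delta$ a positive integer not of the form $\beta\bar\beta$ with $\beta\in\mathcal{O}_d$, $k\ge1$ odd, and $$P_{k,\Delta}(z,\bar z)=\sum_{\substack{(a,b,c)\in\mathbb{Z}\times\mathcal{O}_d\times\mathbb{Z}\\ b\bar b-ac=\Delta,\ c<0<a}}\left(az\bar z+bz+\bar b\bar z+c\right)^k .$$ Let $\varepsilon=\begin{psmallmatrix}-1&0\\0&1\end{psmallmatrix}$, $S=\begin{psmallmatrix}0&-1\\1&0\end{psmallmatrix}$, $T=\begin{psmallmatrix}1&1\\0&1\end{psmallmatrix}$. Then: (1) $P_{k,\Delta}(\bar z,z)=P_{k,\Delta}(z,\bar z)$; (2) $P_{k,\Delta}(uz,\bar u\bar z)=P_{k,\Delta}(z,\bar z)$ for every unit $u\in\mathcal{O}_d$; (3) $P_{k,\Delta}|(\mathbf{1}+S)=0$; (4) $P_{k,\Delta}|(\mathbf{1}+TS\varepsilon-T)=0$; (5) if $d=7$, then with $\omega=\frac{1+\sqrt{-7}}{2}$ and $T_\omega=\begin{psmallmatrix}1&\omega\\0&1\end{psmallmatrix}$, $$P_{k,\Delta}|(\mathbf{1}-T_\omega-ST^{-1}T_\omega S-TT_\omega^{-1}ST_\omega)=0.$$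
   Context: Polynomials are in the independent variables $z,\bar z$. For a polynomial $P(z,\bar z)$ of degree at most $k$ in each variable and $\gamma=\begin{psmallmatrix}a&b\\c&e\end{psmallmatrix}\in\mathbf{GL}(2,\mathbb{C})$, $(P|\gamma)(z,\bar z)=(cz+e)^k\overline{(cz+e)}^kP\!\left(\frac{az+b}{cz+e},\frac{\bar a\bar z+\bar b}{\bar c\bar z+\bar e}\right)$; this is a right action ($P|(\gamma_1\gamma_2)=(P|\gamma_1)|\gamma_2$) extended linearly to the group ring, $\mathbf{1}$ is the identity matrix. *)

From HB Require Import structures.
From mathcomp Require Import all_boot all_order all_algebra.
Set Implicit Arguments. Unset Strict Implicit. Unset Printing Implicit Defensive.
Import Order.TTheory GRing.Theory Num.Theory.
Local Open Scope ring_scope.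

(* Complex numbers: an arbitrary numClosedFieldType C (e.g. C = R[i]),
   with conjugation x^* and 'i. *)

Section Defs.
Variable C : numClosedFieldType.

Definition sqrtm (d : nat) : C := 'i * sqrtC (d%:R).

(* Z-basis generator of O_d = ring of integers of Q(sqrt(-d)), d squarefree:
   (1+sqrt(-d))/2 if -d = 1 mod 4 (i.e. d = 3 mod 4), sqrt(-d) otherwise. *)
Definition omega_d (d : nat) : C :=
  if (d %% 4 == 3)%N then (1 + sqrtm d) / 2 else sqrtm d.

Definition in_Od (d : nat) (b : C) : Prop :=
  exists x y : int, b = x%:~R + y%:~R * omega_d d.

Definition unit_Od (d : nat) (u : C) : Prop :=
  in_Od d u /\ exists v : C, in_Od d v /\ u * v = 1.

(* Polynomials in the independent variables z, zbar:
   {poly {poly C}}; inner variable = z, outer variable = zbar. *)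
Definition cst (c : C) : {poly {poly C}} := c%:P%:P.
Definition Zv : {poly {poly C}} := ('X)%:P.
Definition Wv : {poly {poly C}} := 'X.

(* Coefficient of z^i zbar^j in P is (P`_j)`_i.
   eval2 P p q = P(p, q)  (substitution of polynomials p, q for z, zbar). *)
Definition eval2 (P p q : {poly {poly C}}) : {poly {poly C}} :=
  \sum_(j < size P) \sum_(i < size P`_j) cst ((P`_j)`_i) * p ^+ i * q ^+ j.

(* The index set {(a,b,c) in Z x O_d x Z | b bbar - a c = Delta,
   c < 0 < a} is finite: a, -c in [1,Delta] and b = x + y omega_d with
   |x|,|y| <= Delta, so we sum over these boxes with the exact
   condition as a filter. *)
Definition Pk (d Delta k : nat) : {poly {poly C}} :=
  \sum_(a < Delta.+1) \sum_(c < Delta.+1)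
   \sum_(x < (2 * Delta).+1) \sum_(y < (2 * Delta).+1)
    let ai : int := (a : nat)%:Z in
    let ci : int := - (c : nat)%:Z in
    let b : C := ((x : nat)%:Z - Delta%:Z)%:~R
                 + ((y : nat)%:Z - Delta%:Z)%:~R * omega_d d in
    if [&& (ci < 0), (0 < ai) & (b * b^* - ai%:~R * ci%:~R == Delta%:R)]
    then (cst ai%:~R * Zv * Wv + cst b * Zv + cst b^* * Wv + cst ci%:~R) ^+ k
    else 0.

Definition mx2 (a b c e : C) : 'M[C]_2 :=
  \matrix_(i, j) if (i : nat) == 0%N then (if (j : nat) == 0%N then a else b)
                 else (if (j : nat) == 0%N then c else e).

(* Weight k slash action of g = (a b; c e) on P of degree <= k in each variable:
   (P|g)(z,zbar) = (cz+e)^k (cbar zbar + ebar)^k P((az+b)/(cz+e), (abar zbar+bbar)/(cbar zbar+ebar)),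
   expanded monomial by monomial. *)
Definition slash (k : nat) (P : {poly {poly C}}) (g : 'M[C]_2) : {poly {poly C}} :=
  let a := g ord0 ord0 in let b := g ord0 ord_max in
  let c := g ord_max ord0 in let e := g ord_max ord_max in
  \sum_(i < k.+1) \sum_(j < k.+1)
    cst ((P`_j)`_i)
    * (cst a * Zv + cst b) ^+ i * (cst c * Zv + cst e) ^+ (k - i)
    * (cst a^* * Wv + cst b^*) ^+ j * (cst c^* * Wv + cst e^*) ^+ (k - j).

Definition mat_eps : 'M[C]_2 := mx2 (-1) 0 0 1.
Definition mat_S : 'M[C]_2 := mx2 0 (-1) 1 0.
Definition mat_T : 'M[C]_2 := mx2 1 1 0 1.

End Defs.

From HB Require Import structures.
From mathcomp Require Import all_boot all_order all_algebra ring zify.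
Set Implicit Arguments. Unset Strict Implicit. Unset Printing Implicit Defensive.
Import Order.TTheory GRing.Theory Num.Theory.
Local Open Scope ring_scope.

(* P_{k,Delta}(z, zbar) is the sum of Q(z, zbar)^k over the integral binary Hermitian forms
   Q(z, zbar) = a z zbar + b z + bbar zbar + c (a, c in Z, b in O_d) of discriminant
   b bbar - a c = Delta with c < 0 < a.  A matrix g = (a' b'; c' e') acts on such forms by
   Q |-> (c' z + e') (c'bar zbar + e'bar) Q(g z, gbar zbar), preserving the discriminant, so
   away from the poles P|g is the same power sum over the transformed forms.  Since Delta is
   not a norm, no form of discriminant Delta has a = 0 or c = 0; hence the sign conditions
   c < 0 < a split each sum into pieces that the transformations permute among themselves,
   Q |-> -Q contributing a sign because k is odd, and every identity reduces to a
   cancellation of reindexed finite sums. *)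

(** * Polynomials in z and zbar *)

Section Horner2.
Variable R : comNzRingType.
Implicit Types (P Q : {poly {poly R}}) (z w : R).

Definition horner2 P z w : R := P.[w%:P].[z].

Lemma horner2D P Q z w : horner2 (P + Q) z w = horner2 P z w + horner2 Q z w.
Proof. by rewrite /horner2 !hornerD. Qed.

Lemma horner2B P Q z w : horner2 (P - Q) z w = horner2 P z w - horner2 Q z w.
Proof. by rewrite /horner2 !hornerD !hornerN. Qed.

Lemma horner2M P Q z w : horner2 (P * Q) z w = horner2 P z w * horner2 Q z w.
Proof. by rewrite /horner2 !hornerM. Qed.

Lemma horner2_exp P n z w : horner2 (P ^+ n) z w = horner2 P z w ^+ n.
Proof. by rewrite /horner2 !horner_exp. Qed.

Lemma horner2_sum I (r : seq I) (p : pred I) (F : I -> {poly {poly R}}) z w :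
  horner2 (\sum_(i <- r | p i) F i) z w = \sum_(i <- r | p i) horner2 (F i) z w.
Proof.
by elim/big_rec2: _ => [|i s1 s2 _ <-]; rewrite ?horner2D // /horner2 !horner0.
Qed.

Lemma horner2C c z w : horner2 c%:P%:P z w = c.
Proof. by rewrite /horner2 !hornerC. Qed.

Lemma horner2_XC z w : horner2 'X%:P z w = z.
Proof. by rewrite /horner2 hornerC hornerX. Qed.

Lemma horner2X z w : horner2 'X z w = w.
Proof. by rewrite /horner2 hornerX hornerC. Qed.

Lemma horner2_coef P z w : horner2 P z w =
  \sum_(j < size P) \sum_(i < size P`_j) P`_j`_i * z ^+ i * w ^+ j.
Proof.
rewrite /horner2 (horner_coef P) horner_sum; apply: eq_bigr => j _.
by rewrite hornerM horner_exp hornerC (horner_coef P`_j) mulr_suml.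
Qed.

Lemma horner2_coef_wide K P z w :
  (size P <= K)%N -> (forall j, (size (P`_j)%R <= K)%N) ->
  horner2 P z w = \sum_(j < K) \sum_(i < K) P`_j`_i * z ^+ i * w ^+ j.
Proof.
move=> leP lePj; rewrite /horner2 (horner_coef_wide w%:P leP) horner_sum.
apply: eq_bigr => j _.
by rewrite hornerM horner_exp hornerC (horner_coef_wide z (lePj j)) mulr_suml.
Qed.

End Horner2.

Section Vanishing.
Variable R : numDomainType.

Lemma poly_horner_eq0 (p : {poly R}) : (forall x, p.[x] = 0) -> p = 0.
Proof.
move=> p0; apply/eqP; apply: contraT => nz_p.
have := max_poly_roots nz_p (rs := [seq i%:R | i <- iota 0 (size p)]).
rewrite size_map size_iota ltnn; apply; first by apply/allP => x _; rewrite /root p0.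
by rewrite map_inj_uniq ?iota_uniq // => i j /eqP; rewrite eqr_nat => /eqP.
Qed.

Lemma horner2_eq0 (P : {poly {poly R}}) : (forall z w, horner2 P z w = 0) -> P = 0.
Proof.
move=> P0; apply/polyP => j; rewrite coef0; apply: poly_horner_eq0 => z.
have Pz0 : map_poly (horner_eval z) P = 0.
  apply: poly_horner_eq0 => w.
  have wE : horner_eval z w%:P = w by exact: hornerC.
  by rewrite -[w in LHS]wE horner_map; exact: P0.
by rewrite -horner_evalE -coef_map Pz0 coef0.
Qed.

Lemma horner2_eq0_off_roots (P : {poly {poly R}}) (f g : {poly R}) :
  f != 0 -> g != 0 ->
  (forall z w, f.[z] != 0 -> g.[w] != 0 -> horner2 P z w = 0) -> P = 0.
Proof.
move=> nz_f nz_g P0.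
suff /eqP : P * f%:P * g^:P = 0.
  by rewrite !mulf_eq0 polyC_eq0 map_polyC_eq0 (negbTE nz_f) (negbTE nz_g) !orbF => /eqP.
apply: horner2_eq0 => z w; rewrite !horner2M.
have -> : horner2 f%:P z w = f.[z] by rewrite /horner2 hornerC.
have -> : horner2 g^:P z w = g.[w] by rewrite /horner2 horner_map hornerC.
have [-> | fz] := eqVneq f.[z] 0; first by rewrite mulr0 mul0r.
have [-> | gw] := eqVneq g.[w] 0; first by rewrite mulr0.
by rewrite P0 // !mul0r.
Qed.

End Vanishing.

Section LinearPoly.
Variable R : idomainType.

Definition lin_poly (c e : R) : {poly R} := c *: 'X + e%:P.

Lemma horner_lin_poly c e z : (lin_poly c e).[z] = c * z + e.
Proof. by rewrite /lin_poly hornerD hornerZ hornerX hornerC. Qed.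

Lemma lin_poly_neq0 c e : (c != 0) || (e != 0) -> lin_poly c e != 0.
Proof.
apply: contraTneq => lin0.
have := horner_lin_poly c e 0; have := horner_lin_poly c e 1.
rewrite lin0 !horner0 mulr1 mulr0 add0r => ce e0.
by move: ce; rewrite -e0 addr0 => c0; rewrite -c0 eqxx.
Qed.

End LinearPoly.

Section Bidegree.
Variable R : comNzRingType.
Implicit Types P Q : {poly {poly R}}.

Definition bideg (Kz Kw : nat) P :=
  (size P <= Kw.+1)%N /\ forall j, (size (P`_j)%R <= Kz.+1)%N.

Lemma bidegW Kz Kw Kz' Kw' P : (Kz <= Kz')%N -> (Kw <= Kw')%N ->
  bideg Kz Kw P -> bideg Kz' Kw' P.
Proof. by move=> lez lew [leP lePj]; split=> [|j]; [lia | have := lePj j; lia]. Qed.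

Lemma bideg0 Kz Kw : bideg Kz Kw 0.
Proof. by split=> [|j]; rewrite ?coef0 size_poly0. Qed.

Lemma bidegD Kz Kw P Q : bideg Kz Kw P -> bideg Kz Kw Q -> bideg Kz Kw (P + Q).
Proof.
move=> [leP lePj] [leQ leQj]; split=> [|j].
  by apply: leq_trans (size_polyD _ _) _; rewrite geq_max leP leQ.
by rewrite coefD; apply: leq_trans (size_polyD _ _) _; rewrite geq_max lePj leQj.
Qed.

Lemma bideg_sum Kz Kw I (r : seq I) (p : pred I) (F : I -> {poly {poly R}}) :
  (forall i, p i -> bideg Kz Kw (F i)) -> bideg Kz Kw (\sum_(i <- r | p i) F i).
Proof. by move=> degF; apply: big_ind => //; [apply: bideg0 | apply: bidegD]. Qed.

Lemma bidegM Kz1 Kw1 Kz2 Kw2 P Q : bideg Kz1 Kw1 P -> bideg Kz2 Kw2 Q ->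
  bideg (Kz1 + Kz2) (Kw1 + Kw2) (P * Q).
Proof.
move=> [leP lePj] [leQ leQj]; split.
  by apply: leq_trans (size_polyMleq _ _) _; have := leq_add leP leQ; lia.
move=> j; rewrite coefM.
apply: (big_ind (fun p : {poly R} => (size p <= (Kz1 + Kz2).+1)%N)).
- by rewrite size_poly0.
- by move=> p1 p2 le1 le2; apply: leq_trans (size_polyD _ _) _; rewrite geq_max le1 le2.
- move=> i _; apply: leq_trans (size_polyMleq _ _) _.
  by have := leq_add (lePj i) (leQj (j - i)%N); lia.
Qed.

Lemma bideg1 : bideg 0 0 1.
Proof.
split=> [|j]; rewrite ?coef1 ?size_poly1 //.
by case: (j == 0%N); rewrite ?size_poly1 ?size_poly0.
Qed.

Lemma bideg_exp Kz Kw P n : bideg Kz Kw P -> bideg (Kz * n) (Kw * n) (P ^+ n).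
Proof.
move=> degP; elim: n => [|n IHn]; first by rewrite expr0 !muln0; apply: bideg1.
by rewrite exprS !mulnS; apply: bidegM.
Qed.

Lemma bidegCC c : bideg 0 0 c%:P%:P.
Proof.
split=> [|j]; first by rewrite size_polyC leq_b1.
by rewrite coefC; case: (j == 0%N); rewrite ?size_polyC ?leq_b1 ?size_poly0.
Qed.

Lemma bideg_XC : bideg 1 0 'X%:P.
Proof.
split=> [|j]; first by rewrite size_polyC leq_b1.
by rewrite coefC; case: (j == 0%N); rewrite ?size_polyX ?size_poly0.
Qed.

Lemma bideg_X : bideg 0 1 'X.
Proof.
split=> [|j]; first by rewrite size_polyX.
by rewrite coefX; case: (j == 1%N); rewrite ?size_poly1 ?size_poly0.
Qed.

End Bidegree.

Lemma mul_expr_div (F : fieldType) (A B : F) (i k : nat) : B != 0 -> (i <= k)%N ->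
  B ^+ k * (A / B) ^+ i = A ^+ i * B ^+ (k - i).
Proof.
move=> nzB le_ik; rewrite -{1}(subnK le_ik) exprD expr_div_n.
have nzBi : B ^+ i != 0 by rewrite expf_neq0.
by field.
Qed.

Section Slash.
Variable C : numClosedFieldType.
Implicit Types (P : {poly {poly C}}) (c z w : C).

Lemma horner2_cst c z w : horner2 (cst c) z w = c.
Proof. exact: horner2C. Qed.

Lemma horner2_Zv z w : horner2 (Zv C) z w = z.
Proof. exact: horner2_XC. Qed.

Lemma horner2_Wv z w : horner2 (Wv C) z w = w.
Proof. exact: horner2X. Qed.

Definition horner2E :=
  (@horner2D C, @horner2B C, @horner2M C, @horner2_exp C, horner2_cst, horner2_Zv, horner2_Wv).

Lemma horner2_eval2 P p q z w :
  horner2 (eval2 P p q) z w = horner2 P (horner2 p z w) (horner2 q z w).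
Proof.
rewrite /eval2 horner2_sum horner2_coef; apply: eq_bigr => j _.
by rewrite horner2_sum; apply: eq_bigr => i _; rewrite !horner2E.
Qed.

Lemma bideg_cst (c : C) : bideg 0 0 (cst c).
Proof. exact: bidegCC. Qed.

Lemma bideg_Zv : bideg 1 0 (Zv C).
Proof. exact: bideg_XC. Qed.

Lemma bideg_Wv : bideg 0 1 (Wv C).
Proof. exact: bideg_X. Qed.

Lemma bideg_hermitian (a b b' c : C) :
  bideg 1 1 (cst a * Zv C * Wv C + cst b * Zv C + cst b' * Wv C + cst c).
Proof.
apply: bidegD; first apply: bidegD; first apply: bidegD.
- exact: bidegM (bidegM (bideg_cst a) bideg_Zv) bideg_Wv.
- exact: bidegW (bidegM (bideg_cst b) bideg_Zv).
- exact: bidegW (bidegM (bideg_cst b') bideg_Wv).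
- exact: bidegW (bideg_cst c).
Qed.

Lemma horner2_slash k P (g : 'M[C]_2) z w : bideg k k P ->
  let a := g ord0 ord0 in let b := g ord0 ord_max in
  let c := g ord_max ord0 in let e := g ord_max ord_max in
  c * z + e != 0 -> c^* * w + e^* != 0 ->
  horner2 (slash k P g) z w =
  (c * z + e) ^+ k * (c^* * w + e^*) ^+ k *
  horner2 P ((a * z + b) / (c * z + e)) ((a^* * w + b^*) / (c^* * w + e^*)).
Proof.
move=> [leP lePj] a b c e nz_z nz_w.
rewrite (horner2_coef_wide _ _ leP lePj) exchange_big mulr_sumr /slash horner2_sum.
apply: eq_bigr => i _; rewrite mulr_sumr horner2_sum; apply: eq_bigr => j _.
have le_ik : (i <= k)%N by rewrite -ltnS.
have le_jk : (j <= k)%N by rewrite -ltnS.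
rewrite !horner2E -/a -/b -/c -/e.
transitivity (P`_j`_i * ((c * z + e) ^+ k * ((a * z + b) / (c * z + e)) ^+ i)
   * ((c^* * w + e^*) ^+ k * ((a^* * w + b^*) / (c^* * w + e^*)) ^+ j)).
  by rewrite !mul_expr_div //; ring.
by ring.
Qed.

End Slash.

Section Mx2.
Variable C : numClosedFieldType.

Lemma mx2E (a b c e : C) :
  [/\ mx2 a b c e ord0 ord0 = a, mx2 a b c e ord0 ord_max = b,
      mx2 a b c e ord_max ord0 = c & mx2 a b c e ord_max ord_max = e].
Proof. by rewrite /mx2 !mxE. Qed.

Lemma mx2_eta (A : 'M[C]_2) :
  A = mx2 (A ord0 ord0) (A ord0 ord_max) (A ord_max ord0) (A ord_max ord_max).
Proof.
apply/matrixP => i j; rewrite /mx2 mxE.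
by case: i => [[|[|i]] ?] //; case: j => [[|[|j]] ?] //=; congr (A _ _); apply: val_inj.
Qed.

Lemma mx2_1 : 1%:M = mx2 1 0 0 (1 : C).
Proof. by rewrite [LHS]mx2_eta !mxE. Qed.

Lemma mx2_mul (a b c e a' b' c' e' : C) :
  mx2 a b c e *m mx2 a' b' c' e' =
  mx2 (a * a' + b * c') (a * b' + b * e') (c * a' + e * c') (c * b' + e * e').
Proof.
rewrite [LHS]mx2_eta !mxE !big_ord_recr !big_ord0 /=.
by rewrite /mx2 !mxE /= !add0r.
Qed.

Lemma invmx_mx2 (a b c e a' b' c' e' : C) :
  mx2 a b c e *m mx2 a' b' c' e' = 1%:M -> invmx (mx2 a b c e) = mx2 a' b' c' e'.
Proof.
move=> mul1; have [unitA _] := mulmx1_unit mul1.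
by rewrite -[RHS](mulKmx unitA) mul1 mulmx1.
Qed.

End Mx2.

(** * Integral Hermitian forms *)

Lemma sqr_le_bound (v B : int) : v * v <= 2 * B - 2 -> - B <= v <= B.
Proof.
move=> le_v; have := @sqr_ge0 _ v; have := @sqr_ge0 _ B; rewrite !expr2 => B2 v2.
have B_ge0 : 0 <= B by lia.
apply/andP; split; rewrite leNgt; apply/negP => lt_v.
- by have := @mulr_ge0 _ (- v - B - 1) (- v + B + 1); lia.
- by have := @mulr_ge0 _ (v - B - 1) (v + B + 1); lia.
Qed.

Lemma big_split3 (I : Type) (V : nmodType) (r : seq I) (P Q : pred I) (F : I -> V) :
  \sum_(i <- r) F i = \sum_(i <- r | P i) F i +
    (\sum_(i <- r | ~~ P i && Q i) F i + \sum_(i <- r | ~~ P i && ~~ Q i) F i).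
Proof. by rewrite (bigID P) /=; congr (_ + _); apply: bigID. Qed.

Lemma reindex_uniq (T : eqType) (V : nmodType) (s : seq T) (p q : pred T)
    (f g : T -> T) (G : T -> V) : uniq s ->
  (forall x, x \in s -> p x -> [/\ f x \in s, q (f x) & g (f x) = x]) ->
  (forall x, x \in s -> q x -> [/\ g x \in s, p (g x) & f (g x) = x]) ->
  \sum_(x <- s | p x) G (f x) = \sum_(x <- s | q x) G x.
Proof.
move=> uniq_s fP gP.
rewrite -big_filter -[RHS]big_filter -(big_map f xpredT G).
apply: perm_big; apply: uniq_perm; rewrite ?filter_uniq //.
- rewrite map_inj_in_uniq ?filter_uniq // => x y.
  rewrite !mem_filter => /andP[px xs] /andP[py ys] fxy.
  by have [_ _ <-] := fP x xs px; have [_ _ <-] := fP y ys py; rewrite fxy.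
move=> y; apply/mapP/idP => [[x] | ].
  rewrite mem_filter => /andP[px xs] ->; have [? ? _] := fP x xs px.
  by rewrite mem_filter; apply/andP.
rewrite mem_filter => /andP[qy ys]; have [? ? fgy] := gP y ys qy.
by exists (g y); rewrite ?mem_filter ?fgy //; apply/andP.
Qed.

(* [(a, x, y, c)] stands for the form with coefficients [a], [b = x + y omega], [c]. *)
Definition hform := (int * int * int * int)%type.
Notation form_a q := q.1.1.1.
Notation form_x q := q.1.1.2.
Notation form_y q := q.1.2.
Notation form_c q := q.2.

Definition normf (t n x y : int) : int := x * x + t * x * y + n * y * y.

Definition disc (t n : int) (q : hform) : int :=
  normf t n (form_x q) (form_y q) - form_a q * form_c q.

Definition admissible (t n : int) (D : nat) (q : hform) : bool :=
  [&& form_c q < 0, 0 < form_a q & disc t n q == D%:Z].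

Definition opp_form (q : hform) : hform :=
  (- form_a q, - form_x q, - form_y q, - form_c q).

Lemma opp_formK : involutive opp_form.
Proof. by move=> [[[a x] y] c]; rewrite /opp_form /= !opprK. Qed.

(* The box and its enumeration order are those of the sum defining [Pk]. *)
Definition box (D : nat) :=
  ('I_D.+1 * 'I_D.+1 * 'I_(2 * D).+1 * 'I_(2 * D).+1)%type.

Definition box_form (D : nat) (i : box D) : hform :=
  ((i.1.1.1 : nat)%:Z, (i.1.2 : nat)%:Z - D%:Z, (i.2 : nat)%:Z - D%:Z,
   - (i.1.1.2 : nat)%:Z).

Definition admissible_seq (t n : int) (D : nat) : seq hform :=
  [seq q <- [seq box_form i | i <- index_enum (box D)] | admissible t n D q].

Section Enumeration.
Variables (t n : int) (D : nat).
Hypotheses (t01 : t = 0 \/ t = 1) (n_ge1 : 1 <= n).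

Lemma normf_ge x y : x * x + y * y <= 2 * normf t n x y.
Proof.
rewrite /normf; have sq_ge0 (v : int) : 0 <= v * v by rewrite -expr2 sqr_ge0.
have := sq_ge0 (x + y); have := sq_ge0 x; have := sq_ge0 y.
by case: t01 => -> *; nia.
Qed.

Lemma normf_ge0 x y : 0 <= normf t n x y.
Proof.
have := normf_ge x y; have := @sqr_ge0 _ x; have := @sqr_ge0 _ y.
by rewrite !expr2; lia.
Qed.

Lemma admissible_bounded (q : hform) : admissible t n D q ->
  [/\ 0 < form_a q <= D%:Z, 0 < - form_c q <= D%:Z,
      - D%:Z <= form_x q <= D%:Z & - D%:Z <= form_y q <= D%:Z].
Proof.
case: q => [[[a x] y] c] /and3P[/= c_lt0 a_gt0 /eqP]; rewrite /disc /= => discE.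
have := normf_ge x y; have := @sqr_ge0 _ x; have := @sqr_ge0 _ y; rewrite !expr2.
move=> *; have le_norm : normf t n x y <= D%:Z - 1 by nia.
by split; [nia | nia | apply: sqr_le_bound; lia | apply: sqr_le_bound; lia].
Qed.

Lemma uniq_admissible_seq : uniq (admissible_seq t n D).
Proof.
rewrite filter_uniq // map_inj_uniq ?index_enum_uniq //.
move=> [[[a1 c1] x1] y1] [[[a2 c2] x2] y2] [eq_a eq_x eq_y eq_c].
by congr (_, _, _, _); apply: ord_inj; lia.
Qed.

Lemma mem_admissible_seq (q : hform) : (q \in admissible_seq t n D) = admissible t n D q.
Proof.
rewrite mem_filter; case adm_q: (admissible t n D q) => //=.
have [/andP[a1 a2] /andP[c1 c2] /andP[x1 x2] /andP[y1 y2]] := admissible_bounded adm_q.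
have lt_a : (absz (form_a q) < D.+1)%N by lia.
have lt_c : (absz (- form_c q) < D.+1)%N by lia.
have lt_x : (absz (form_x q + D%:Z)%R < (2 * D).+1)%N by lia.
have lt_y : (absz (form_y q + D%:Z)%R < (2 * D).+1)%N by lia.
apply/mapP; exists (Ordinal lt_a, Ordinal lt_c, Ordinal lt_x, Ordinal lt_y).
  exact: mem_index_enum.
move: a1 a2 c1 c2 x1 x2 y1 y2.
case: q {adm_q} lt_a lt_c lt_x lt_y => [[[a x] y] c] /= *.
by congr (_, _, _, _); rewrite /=; lia.
Qed.

Lemma reindex_admissible (p q : pred hform) (f g : hform -> hform)
    (V : nmodType) (G : hform -> V) :
  (forall x, admissible t n D x -> p x ->
     [/\ admissible t n D (f x), q (f x) & g (f x) = x]) ->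
  (forall x, admissible t n D x -> q x ->
     [/\ admissible t n D (g x), p (g x) & f (g x) = x]) ->
  \sum_(x <- admissible_seq t n D | p x) G (f x) =
  \sum_(x <- admissible_seq t n D | q x) G x.
Proof.
move=> fP gP; apply: reindex_uniq uniq_admissible_seq _ _ => x;
  rewrite !mem_admissible_seq; [exact: fP | exact: gP].
Qed.

Lemma reindex_admissible_opp (p q : pred hform) (f h k k' : hform -> hform)
    (V : zmodType) (G : hform -> V) :
  {morph G : x / opp_form x >-> - x} -> (forall x, f x = opp_form (h (k x))) ->
  (forall x, admissible t n D x -> p x ->
     [/\ admissible t n D (k x), q (k x) & k' (k x) = x]) ->
  (forall x, admissible t n D x -> q x ->
     [/\ admissible t n D (k' x), p (k' x) & k (k' x) = x]) ->
  \sum_(x <- admissible_seq t n D | p x) G (f x) =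
  - \sum_(x <- admissible_seq t n D | q x) G (h x).
Proof.
move=> G_odd fE kP k'P; rewrite -sumrN.
under eq_bigr => x _ do rewrite fE G_odd.
exact: (reindex_admissible (fun x => - G (h x)) kP k'P).
Qed.

End Enumeration.

Ltac solve_reindex :=
  let discE := fresh "discE" in
  move=> [[[? ?] ?] ?]; rewrite /admissible /disc /normf /=;
  move=> /and3P[? ? /eqP discE] *;
  split; [ apply/and3P; split; [lia | lia | apply/eqP; rewrite -discE; ring]
         | lia | congr (_, _, _, _); rewrite /=; ring ].

Ltac solve_reindex_using nz :=
  let q := fresh "q" in let adm := fresh "adm" in
  move=> q adm; have := nz q adm; move: q adm; solve_reindex.

Section NonNorm.
Variables (t n : int) (D : nat).
Hypotheses (t01 : t = 0 \/ t = 1) (n_ge1 : 1 <= n).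
Hypothesis not_norm : forall x y, normf t n x y != D%:Z.
Local Notation S := (admissible_seq t n D).

Lemma disc_a_neq0 (q : hform) : disc t n q = D%:Z -> form_a q != 0.
Proof.
case: q => [[[a x] y] c]; rewrite /disc /= => discE.
by apply: contraNneq (not_norm x y) => a0; rewrite -discE a0 mul0r subr0.
Qed.

Lemma disc_c_neq0 (q : hform) : disc t n q = D%:Z -> form_c q != 0.
Proof.
case: q => [[[a x] y] c]; rewrite /disc /= => discE.
by apply: contraNneq (not_norm x y) => c0; rewrite -discE c0 mulr0 subr0.
Qed.

Definition conj_form (q : hform) : hform :=
  (form_a q, form_x q + t * form_y q, - form_y q, form_c q).

Lemma sum_conj_form (V : nmodType) (G : hform -> V) :
  \sum_(q <- S) G (conj_form q) = \sum_(q <- S) G q.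
Proof.
by apply: (reindex_admissible t01 n_ge1 (p := xpredT) (q := xpredT) (g := conj_form)) => //;
  solve_reindex.
Qed.

Definition mul_form (u1 u2 : int) (q : hform) : hform :=
  (form_a q, form_x q * u1 - n * form_y q * u2,
   form_x q * u2 + form_y q * u1 + t * form_y q * u2, form_c q).

Lemma normf_mul x y u1 u2 :
  normf t n (x * u1 - n * y * u2) (x * u2 + y * u1 + t * y * u2) =
  normf t n x y * normf t n u1 u2.
Proof. by rewrite /normf; ring. Qed.

Lemma mul_formK u1 u2 : normf t n u1 u2 = 1 ->
  cancel (mul_form u1 u2) (mul_form (u1 + t * u2) (- u2)).
Proof.
move=> normu [[[a x] y] c]; rewrite /mul_form /=; congr (_, _, _, _).
  by transitivity (x * normf t n u1 u2); [rewrite /normf; ring | rewrite normu mulr1].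
by transitivity (y * normf t n u1 u2); [rewrite /normf; ring | rewrite normu mulr1].
Qed.

Lemma admissible_mul_form u1 u2 q : normf t n u1 u2 = 1 ->
  admissible t n D (mul_form u1 u2 q) = admissible t n D q.
Proof. by move=> normu; rewrite /admissible /disc /= normf_mul normu mulr1. Qed.

Lemma sum_mul_form (V : nmodType) (G : hform -> V) u1 u2 : normf t n u1 u2 = 1 ->
  \sum_(q <- S) G (mul_form u1 u2 q) = \sum_(q <- S) G q.
Proof.
move=> normu.
have normu' : normf t n (u1 + t * u2) (- u2) = 1 by rewrite -normu /normf; ring.
have u1E : u1 + t * u2 + t * - u2 = u1 by ring.
apply: (reindex_admissible t01 n_ge1 (p := xpredT) (q := xpredT)
  (g := mul_form (u1 + t * u2) (- u2))) => q adm_q _.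
  by rewrite admissible_mul_form // mul_formK.
have := mul_formK normu' q; rewrite u1E opprK => mulK.
by rewrite admissible_mul_form // mulK.
Qed.

Definition swap_form (q : hform) : hform :=
  (- form_c q, form_x q + t * form_y q, - form_y q, - form_a q).

Lemma sum_opp_swap_form (V : zmodType) (G : hform -> V) :
  {morph G : q / opp_form q >-> - q} ->
  \sum_(q <- S) G q + \sum_(q <- S) G (opp_form (swap_form q)) = 0.
Proof.
move=> G_odd; under [X in _ + X]eq_bigr => q _ do rewrite G_odd.
rewrite sumrN (reindex_admissible t01 n_ge1 (p := xpredT) (q := xpredT)
  (f := swap_form) (g := swap_form)) ?subrr //;
  solve_reindex.
Qed.

Definition T_form (q : hform) : hform :=
  (form_a q, form_x q + form_a q, form_y q,
   form_a q + (2 * form_x q + t * form_y q) + form_c q).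

Definition T_form_inv (q : hform) : hform :=
  (form_a q, form_x q - form_a q, form_y q,
   form_a q - (2 * form_x q + t * form_y q) + form_c q).

Definition TSe_form (q : hform) : hform :=
  (form_a q + (2 * form_x q + t * form_y q) + form_c q,
   form_x q + t * form_y q + form_a q, - form_y q, form_a q).

Definition opp_TSe_form_inv (q : hform) : hform :=
  (- form_c q, form_c q - (form_x q + t * form_y q), form_y q,
   - form_a q + (2 * form_x q + t * form_y q) - form_c q).

Definition twist_form (q : hform) : hform :=
  (form_a q + (2 * form_x q + t * form_y q) + form_c q,
   - form_x q - form_c q, - form_y q, form_c q).

Lemma T_form_twist q : T_form q = TSe_form (twist_form q).
Proof. by rewrite /T_form /TSe_form /twist_form /=; congr (_, _, _, _); ring. Qed.

Lemma T_forms_neq0 q : admissible t n D q ->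
  (form_c (T_form q) != 0) && (form_c (T_form_inv q) != 0).
Proof.
case/and3P=> _ _ /eqP discE.
by rewrite !disc_c_neq0 //; rewrite -discE /disc /normf /=; ring.
Qed.

Lemma sum_T_TSe_form (V : zmodType) (G : hform -> V) :
  {morph G : q / opp_form q >-> - q} ->
  \sum_(q <- S) G q + \sum_(q <- S) G (TSe_form q) - \sum_(q <- S) G (T_form q) = 0.
Proof.
move=> G_odd.
rewrite [X in X + _ - _](bigID (fun q => form_c (T_form_inv q) < 0)) /=.
rewrite [X in _ + X - _](bigID (fun q => form_c (T_form q) < 0)) /=.
rewrite [X in _ - X](bigID (fun q => form_c (T_form q) < 0)) /=.
have T_neg : \sum_(q <- S | form_c (T_form q) < 0) G (T_form q) =
             \sum_(q <- S | form_c (T_form_inv q) < 0) G q.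
  by apply: (reindex_admissible t01 n_ge1 (g := T_form_inv));
    solve_reindex_using T_forms_neq0.
have TSe_neg : \sum_(q <- S | form_c (T_form q) < 0) G (TSe_form q) =
               - \sum_(q <- S | ~~ (form_c (T_form_inv q) < 0)) G q.
  apply: (reindex_admissible_opp t01 n_ge1 (h := id)
    (k := fun q => opp_form (TSe_form q)) (k' := opp_TSe_form_inv) G_odd);
    [by move=> q; rewrite opp_formK | |];
    solve_reindex_using T_forms_neq0.
have T_nonneg : \sum_(q <- S | ~~ (form_c (T_form q) < 0)) G (T_form q) =
                \sum_(q <- S | ~~ (form_c (T_form q) < 0)) G (TSe_form q).
  under eq_bigr => q _ do rewrite T_form_twist.
  by apply: (reindex_admissible t01 n_ge1 (f := twist_form) (g := twist_form)
    (fun q => G (TSe_form q))); solve_reindex_using T_forms_neq0.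
by rewrite T_neg TSe_neg T_nonneg addrA addrK subrr.
Qed.

End NonNorm.

(* [X_form q] is the image of [q] under the matrix X = T_omega, S T^-1 T_omega S or
   T T_omega^-1 S T_omega, spelled Tw, STiTwS and TTwiSTw (see [form_slash_Tw] etc.). *)
Section Omega7.
Variable D : nat.
Hypothesis not_norm : forall x y, normf 1 2 x y != D%:Z.
Local Notation S := (admissible_seq 1 2 D).

Let t01 : (1 : int) = 0 \/ (1 : int) = 1. Proof. by right. Qed.
Let n_ge1 : (1 : int) <= 2. Proof. by []. Qed.

Definition Tw_form (q : hform) : hform :=
  (form_a q, form_x q + form_a q, form_y q - form_a q,
   2 * form_a q + form_x q - 3 * form_y q + form_c q).

Definition Tw_form_inv (q : hform) : hform :=
  (form_a q, form_x q - form_a q, form_y q + form_a q,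
   2 * form_a q - form_x q + 3 * form_y q + form_c q).

Definition STiTwS_form (q : hform) : hform :=
  (form_a q + form_x q - 3 * form_y q + 2 * form_c q,
   form_x q + form_c q, form_y q - form_c q, form_c q).

Definition STiTwS_form_inv (q : hform) : hform :=
  (form_a q - form_x q + 3 * form_y q + 2 * form_c q,
   form_x q - form_c q, form_y q + form_c q, form_c q).

Definition TTwiSTw_form (q : hform) : hform :=
  (2 * form_a q + form_x q + 4 * form_y q + form_c q,
   form_a q + 3 * form_y q + form_c q,
   - form_a q - form_x q - 3 * form_y q - form_c q,
   form_a q + form_x q + 4 * form_y q + 2 * form_c q).

Definition TTwiSTw_form_inv (q : hform) : hform :=
  (2 * form_a q - form_x q + 3 * form_y q + form_c q,
   - form_x q - form_y q,
   - form_a q + form_x q - 2 * form_y q - form_c q,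
   form_a q - form_x q + 3 * form_y q + 2 * form_c q).

Definition Tw_to_TTwiSTw (q : hform) : hform :=
  (- form_c q, form_x q + form_y q, - form_y q + form_c q,
   - form_a q - form_x q + 3 * form_y q - 2 * form_c q).

Definition Tw_to_TTwiSTw_inv (q : hform) : hform :=
  (- 2 * form_a q - form_x q - 4 * form_y q - form_c q,
   form_a q + form_x q + form_y q, - form_a q - form_y q, - form_a q).

Definition Tw_to_STiTwS (q : hform) : hform :=
  (- form_a q - form_x q + 3 * form_y q - 2 * form_c q,
   form_a q - 3 * form_y q + form_c q,
   - form_a q - form_x q + 2 * form_y q - form_c q,
   - 2 * form_a q - form_x q + 3 * form_y q - form_c q).

Definition TTwiSTw_to_STiTwS (q : hform) : hform :=
  (- form_c q, form_x q + form_y q + form_c q, - form_y q - form_c q,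
   - form_a q - form_x q - 4 * form_y q - 2 * form_c q).

Definition TTwiSTw_to_STiTwS_inv (q : hform) : hform :=
  (- 2 * form_a q - form_x q + 3 * form_y q - form_c q,
   form_x q + form_y q, form_a q - form_y q, - form_a q).

Lemma Tw_form_as_TTwiSTw q : Tw_form q = opp_form (TTwiSTw_form (Tw_to_TTwiSTw q)).
Proof. by rewrite /Tw_form /opp_form /TTwiSTw_form /=; congr (_, _, _, _); ring. Qed.

Lemma Tw_form_as_STiTwS q : Tw_form q = opp_form (STiTwS_form (Tw_to_STiTwS q)).
Proof. by rewrite /Tw_form /opp_form /STiTwS_form /=; congr (_, _, _, _); ring. Qed.

Lemma TTwiSTw_form_as_STiTwS q :
  TTwiSTw_form q = opp_form (STiTwS_form (TTwiSTw_to_STiTwS q)).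
Proof. by rewrite /TTwiSTw_form /opp_form /STiTwS_form /=; congr (_, _, _, _); ring. Qed.

Lemma Tw_forms_neq0 q : admissible 1 2 D q ->
  [&& form_c (Tw_form q) != 0, form_a (STiTwS_form q) != 0,
      form_a (TTwiSTw_form q) != 0, form_c (TTwiSTw_form q) != 0,
      form_c (Tw_form_inv q) != 0 & form_a (STiTwS_form_inv q) != 0].
Proof.
case/and3P=> _ _ /eqP discE.
by rewrite !(disc_c_neq0 not_norm) ?(disc_a_neq0 not_norm) //;
  rewrite -discE /disc /normf /=; ring.
Qed.

Lemma sum_Tw_neg (V : nmodType) (G : hform -> V) :
  \sum_(q <- S | form_c (Tw_form q) < 0) G (Tw_form q) =
  \sum_(q <- S | form_c (Tw_form_inv q) < 0) G q.
Proof.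
by apply: (reindex_admissible t01 n_ge1 (g := Tw_form_inv));
  solve_reindex_using Tw_forms_neq0.
Qed.

Lemma sum_STiTwS_pos (V : nmodType) (G : hform -> V) :
  \sum_(q <- S | 0 < form_a (STiTwS_form q)) G (STiTwS_form q) =
  \sum_(q <- S | ~~ (form_c (Tw_form_inv q) < 0) &&
                 (0 < form_a (STiTwS_form_inv q))) G q.
Proof.
by apply: (reindex_admissible t01 n_ge1 (g := STiTwS_form_inv));
  solve_reindex_using Tw_forms_neq0.
Qed.

Lemma sum_TTwiSTw_mixed (V : nmodType) (G : hform -> V) :
  \sum_(q <- S | (0 < form_a (TTwiSTw_form q)) && (form_c (TTwiSTw_form q) < 0))
    G (TTwiSTw_form q) =
  \sum_(q <- S | ~~ (form_c (Tw_form_inv q) < 0) &&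
                 ~~ (0 < form_a (STiTwS_form_inv q))) G q.
Proof.
by apply: (reindex_admissible t01 n_ge1 (g := TTwiSTw_form_inv));
  solve_reindex_using Tw_forms_neq0.
Qed.

Lemma sum_Tw_as_TTwiSTw (V : zmodType) (G : hform -> V) :
  {morph G : q / opp_form q >-> - q} ->
  \sum_(q <- S | ~~ (form_c (Tw_form q) < 0) && (0 < form_a (STiTwS_form q)))
    G (Tw_form q) =
  - \sum_(q <- S | ~~ (0 < form_a (TTwiSTw_form q))) G (TTwiSTw_form q).
Proof.
move=> G_odd; apply: (reindex_admissible_opp t01 n_ge1 (k' := Tw_to_TTwiSTw_inv)
  G_odd Tw_form_as_TTwiSTw); solve_reindex_using Tw_forms_neq0.
Qed.

Lemma sum_Tw_as_STiTwS (V : zmodType) (G : hform -> V) :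
  {morph G : q / opp_form q >-> - q} ->
  \sum_(q <- S | ~~ (form_c (Tw_form q) < 0) && ~~ (0 < form_a (STiTwS_form q)))
    G (Tw_form q) =
  - \sum_(q <- S | ~~ (0 < form_a (STiTwS_form q)) && (0 < form_c (Tw_form q)))
      G (STiTwS_form q).
Proof.
move=> G_odd; apply: (reindex_admissible_opp t01 n_ge1 (k' := Tw_to_STiTwS)
  G_odd Tw_form_as_STiTwS); solve_reindex_using Tw_forms_neq0.
Qed.

Lemma sum_TTwiSTw_as_STiTwS (V : zmodType) (G : hform -> V) :
  {morph G : q / opp_form q >-> - q} ->
  \sum_(q <- S | (0 < form_a (TTwiSTw_form q)) && ~~ (form_c (TTwiSTw_form q) < 0))
    G (TTwiSTw_form q) =
  - \sum_(q <- S | ~~ (0 < form_a (STiTwS_form q)) && ~~ (0 < form_c (Tw_form q)))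
      G (STiTwS_form q).
Proof.
move=> G_odd; apply: (reindex_admissible_opp t01 n_ge1 (k' := TTwiSTw_to_STiTwS_inv)
  G_odd TTwiSTw_form_as_STiTwS); solve_reindex_using Tw_forms_neq0.
Qed.

Lemma sum_Tw_forms (V : zmodType) (G : hform -> V) :
  {morph G : q / opp_form q >-> - q} ->
  \sum_(q <- S) G q - \sum_(q <- S) G (Tw_form q) - \sum_(q <- S) G (STiTwS_form q)
  - \sum_(q <- S) G (TTwiSTw_form q) = 0.
Proof.
move=> G_odd.
rewrite (big_split3 _ (fun q => form_c (Tw_form_inv q) < 0)
  (fun q => 0 < form_a (STiTwS_form_inv q)) G).
rewrite (big_split3 _ (fun q => form_c (Tw_form q) < 0)
  (fun q => 0 < form_a (STiTwS_form q)) (fun q => G (Tw_form q))).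
rewrite (big_split3 _ (fun q => 0 < form_a (STiTwS_form q))
  (fun q => 0 < form_c (Tw_form q)) (fun q => G (STiTwS_form q))).
rewrite (bigID (fun q => 0 < form_a (TTwiSTw_form q)) _ (fun q => G (TTwiSTw_form q))).
rewrite (bigID (fun q => form_c (TTwiSTw_form q) < 0) _ (fun q => G (TTwiSTw_form q))).
rewrite sum_Tw_neg sum_STiTwS_pos sum_TTwiSTw_mixed.
rewrite !sum_Tw_as_TTwiSTw ?sum_Tw_as_STiTwS ?sum_TTwiSTw_as_STiTwS //.
have cancel (A B C Y Z W : V) :
  A + (B + C) - (A + (- Z + - Y)) - (B + (Y + W)) - (C - W + Z) = 0.
  rewrite (addrC A) addrKA opprD !opprK -(addrA B) (addrC B) addrKA.
  by rewrite (addrA C) addrKA (addrAC C (- W)) subrr.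
exact: cancel.
Qed.

End Omega7.

(** * Values of the forms *)

Section FormEval.
Variables (C : numClosedFieldType) (om : C) (t n : int).
Hypothesis om_conj : om^* = t%:~R - om.
Hypothesis om_sqr : om ^+ 2 = t%:~R * om - n%:~R.
Implicit Types (q : hform) (a b c e z w : C).

Definition form_b q : C := (form_x q)%:~R + (form_y q)%:~R * om.

Definition form_eval q z w : C :=
  (form_a q)%:~R * z * w + form_b q * z + (form_b q)^* * w + (form_c q)%:~R.

Definition form_slash a b c e q z w : C :=
  (c * z + e) * (c^* * w + e^*) *
  form_eval q ((a * z + b) / (c * z + e)) ((a^* * w + b^*) / (c^* * w + e^*)).

Lemma form_b_conj q : (form_b q)^* = (form_x q + t * form_y q)%:~R - (form_y q)%:~R * om.
Proof. by rewrite /form_b rmorphD rmorphM !rmorph_int /= om_conj intrD intrM; ring. Qed.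

Lemma form_b_norm q : form_b q * (form_b q)^* = (normf t n (form_x q) (form_y q))%:~R.
Proof. by rewrite form_b_conj /form_b /normf !intrD !intrM; ring: om_sqr. Qed.

Lemma form_eval_conj q z w : form_eval q w z = form_eval (conj_form t q) z w.
Proof. by rewrite /form_eval !form_b_conj /form_b /=; ring. Qed.

Lemma form_eval_opp q z w : form_eval (opp_form q) z w = - form_eval q z w.
Proof. by rewrite /form_eval !form_b_conj /form_b /=; rewrite !intrD !intrM !intrN; ring. Qed.

Lemma form_eval_mul u1 u2 q z w : let u := form_b (0, u1, u2, 0) in u * u^* = 1 ->
  form_eval q (u * z) (u^* * w) = form_eval (mul_form t n u1 u2 q) z w.
Proof.
move=> u norm_u.
have bE : form_b q * u = form_b (mul_form t n u1 u2 q).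
  by rewrite /u /form_b /mul_form /=; rewrite !intrD !intrM !intrN; ring: om_sqr.
rewrite /form_eval -bE rmorphM /=.
transitivity ((form_a q)%:~R * (u * u^*) * z * w + form_b q * u * z +
  (form_b q)^* * u^* * w + (form_c q)%:~R); first by ring.
by rewrite norm_u; ring.
Qed.

Ltac expand_form_slash :=
  rewrite /form_slash /form_eval !form_b_conj /form_b /=;
  rewrite ?(rmorph0, rmorph1, rmorphN, rmorphD, rmorphB, rmorphM) /= ?om_conj.

Lemma form_slash1 q z w : form_slash 1 0 0 1 q z w = form_eval q z w.
Proof. by expand_form_slash; field. Qed.

Lemma form_slash_S q z w : z != 0 -> w != 0 ->
  form_slash 0 (-1) 1 0 q z w = form_eval (opp_form (swap_form t q)) z w.
Proof. by move=> nz_z nz_w; expand_form_slash; field; rewrite nz_z nz_w. Qed.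

Lemma form_slash_T q z w : form_slash 1 1 0 1 q z w = form_eval (T_form t q) z w.
Proof. by expand_form_slash; field. Qed.

Lemma form_slash_TSe q z w : z != 0 -> w != 0 ->
  form_slash (-1) (-1) (-1) 0 q z w = form_eval (TSe_form t q) z w.
Proof. by move=> nz_z nz_w; expand_form_slash; field; rewrite nz_z nz_w. Qed.

End FormEval.

Section FormEval7.
Variables (C : numClosedFieldType) (om : C).
Hypothesis om_conj : om^* = 1%:~R - om.
Hypothesis om_sqr : om ^+ 2 = 1%:~R * om - 2%:~R.
Implicit Types (q : hform) (z w : C).

Ltac expand_form_slash :=
  rewrite /form_slash /form_eval !(form_b_conj om_conj) /form_b /=;
  rewrite ?(rmorph0, rmorph1, rmorphN, rmorphD, rmorphB, rmorphM) /= ?om_conj.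

Lemma form_slash_Tw q z w : form_slash om 1 om 0 1 q z w = form_eval om (Tw_form q) z w.
Proof. by expand_form_slash; field: om_sqr. Qed.

Lemma form_slash_STiTwS q z w : (om - 1) * z + -1 != 0 -> (om - 1)^* * w + (-1)^* != 0 ->
  form_slash om (-1) 0 (om - 1) (-1) q z w = form_eval om (STiTwS_form q) z w.
Proof.
rewrite ?(rmorph1, rmorphB, rmorphN1) /= om_conj => nz_z nz_w.
by expand_form_slash; field: om_sqr; rewrite nz_z nz_w.
Qed.

Lemma form_slash_TTwiSTw q z w : 1 * z + om != 0 -> 1^* * w + om^* != 0 ->
  form_slash om (1 - om) 1 1 om q z w = form_eval om (TTwiSTw_form q) z w.
Proof.
rewrite rmorph1 om_conj mulr1z !mul1r => nz_z nz_w.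
by expand_form_slash; field: om_sqr; rewrite nz_z nz_w.
Qed.

End FormEval7.

Definition trace_d (d : nat) : int := if (d %% 4 == 3)%N then 1 else 0.
Definition norm_d (d : nat) : int := if (d %% 4 == 3)%N then (d %/ 4)%:Z + 1 else d%:Z.

Section OmegaD.
Variables (C : numClosedFieldType) (d : nat).
Hypothesis d_in : d \in [:: 1; 2; 3; 7; 11]%N.

Lemma trace_d01 : trace_d d = 0 \/ trace_d d = 1.
Proof. by move: d_in; rewrite /trace_d; case: ifP; auto. Qed.

Lemma norm_d_ge1 : 1 <= norm_d d.
Proof. by move: d_in; rewrite !inE /norm_d => /or4P[|||/orP[]] /eqP->. Qed.

Lemma omega_d_minpoly :
  (omega_d C d)^* = (trace_d d)%:~R - omega_d C d /\
  omega_d C d ^+ 2 = (trace_d d)%:~R * omega_d C d - (norm_d d)%:~R.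
Proof.
have sqrt_conj : (sqrtC (d%:R : C))^* = sqrtC d%:R.
  by rewrite geC0_conj // sqrtC_ge0 ler0n.
have sqrtm_conj : (sqrtm C d)^* = - sqrtm C d.
  by rewrite /sqrtm rmorphM /= sqrt_conj conjCi mulNr.
have sqrtm_sqr : sqrtm C d ^+ 2 = - d%:R.
  by rewrite /sqrtm exprMn sqrCi sqrtCK mulN1r.
have two_conj : (2 : C)^* = 2 by rewrite rmorph_nat.
have two_neq0 : (2 : C) != 0 by rewrite pnatr_eq0.
move: sqrtm_conj sqrtm_sqr; rewrite /omega_d /trace_d /norm_d.
move: d_in; rewrite !inE => /or4P[|||/orP[]] /eqP-> /= sq_conj sq_sqr.
- by split; [rewrite sq_conj | rewrite sq_sqr]; ring.
- by split; [rewrite sq_conj | rewrite sq_sqr]; ring.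
all: split; first by rewrite fmorph_div rmorphD /= rmorph1 sq_conj two_conj; field.
- by rewrite (_ : (3 %/ 4)%N = 0%N) // intrD !pmulrn; field: sq_sqr.
- by rewrite (_ : (7 %/ 4)%N = 1%N) // intrD !pmulrn; field: sq_sqr.
- by rewrite (_ : (11 %/ 4)%N = 2%N) // intrD !pmulrn; field: sq_sqr.
Qed.

Lemma horner2_Pk D k z w :
  horner2 (Pk C d D k) z w =
  \sum_(q <- admissible_seq (trace_d d) (norm_d d) D) form_eval (omega_d C d) q z w ^+ k.
Proof.
have [om_conj om_sqr] := omega_d_minpoly.
rewrite /admissible_seq big_filter big_map big_mkcond /Pk !pair_bigA horner2_sum /=.
apply: eq_bigr => i _; set b := (_ + _ * omega_d C d).
have bE : b = form_b (omega_d C d) (box_form i) by [].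
have -> : [&& - (i.1.1.2 : nat)%:Z < 0, 0 < (i.1.1.1 : nat)%:Z
   & b * b^* - ((i.1.1.1 : nat)%:Z)%:~R * (- (i.1.1.2 : nat)%:Z)%:~R == D%:R] =
   admissible (trace_d d) (norm_d d) D (box_form i).
  by rewrite bE (form_b_norm om_conj om_sqr) -intrM -intrB -[D%:R]/((D%:Z)%:~R) eqr_int.
case: ifP => _; last by rewrite /horner2 !horner0.
by rewrite !horner2E.
Qed.

End OmegaD.

Section Main.
Variables (C : numClosedFieldType) (d D k : nat).
Hypothesis d_in : d \in [:: 1; 2; 3; 7; 11]%N.
Local Notation om := (omega_d C d).
Local Notation t := (trace_d d).
Local Notation n := (norm_d d).
Local Notation S := (admissible_seq t n D).
Local Notation P := (Pk C d D k).
Let om_conj := (omega_d_minpoly C d_in).1.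
Let om_sqr := (omega_d_minpoly C d_in).2.
Let t01 := trace_d01 d_in.
Let n_ge1 := norm_d_ge1 d_in.

Lemma Pk_conj_sym : eval2 P (Wv C) (Zv C) = P.
Proof.
apply/eqP; rewrite -subr_eq0; apply/eqP; apply: horner2_eq0 => z w.
rewrite horner2B horner2_eval2 horner2_Wv horner2_Zv !horner2_Pk //.
under eq_bigr => q _ do rewrite (form_eval_conj om_conj).
by rewrite (sum_conj_form D t01 n_ge1 (fun q => form_eval om q z w ^+ k)) subrr.
Qed.

Lemma unit_Od_norm1 u : unit_Od d u ->
  exists u1 u2, [/\ u = form_b om (0, u1, u2, 0), normf t n u1 u2 = 1 & u * u^* = 1].
Proof.
move=> [[u1 [u2 uE]] [v [[v1 [v2 vE]] uv1]]].
have normE (x y : int) : (x%:~R + y%:~R * om) * (x%:~R + y%:~R * om)^* =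
    (normf t n x y)%:~R by exact: (form_b_norm om_conj om_sqr (0, x, y, 0)).
have norm_uv : normf t n u1 u2 * normf t n v1 v2 = 1.
  apply/eqP; rewrite -(eqr_int C) intrM -!normE -uE -vE.
  have -> : u * u^* * (v * v^*) = (u * v) * (u * v)^* by rewrite rmorphM /=; ring.
  by rewrite uv1 rmorph1 mulr1.
have norm_u : normf t n u1 u2 = 1.
  move/(congr1 absz): norm_uv; rewrite abszM => /eqP; rewrite muln_eq1 => /andP[/eqP normu1 _].
  by rewrite -(gez0_abs (normf_ge0 t01 n_ge1 _ _)) normu1.
by exists u1, u2; split; rewrite // uE normE norm_u.
Qed.

Lemma Pk_unit_invariant u : unit_Od d u -> eval2 P (cst u * Zv C) (cst u^* * Wv C) = P.
Proof.
case/unit_Od_norm1 => u1 [u2 [-> norm_u norm1]].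
apply/eqP; rewrite -subr_eq0; apply/eqP; apply: horner2_eq0 => z w.
rewrite horner2B horner2_eval2 !horner2E !horner2_Pk //.
under eq_bigr => q _ do rewrite (form_eval_mul om_sqr _ _ _ norm1).
by rewrite (sum_mul_form D t01 n_ge1 (fun q => form_eval om q z w ^+ k) norm_u) subrr.
Qed.

Lemma bideg_Pk : bideg k k P.
Proof.
rewrite /Pk; do 4 (apply: bideg_sum => ? _); rewrite /=.
case: ifP => _; last exact: bideg0.
by have := bideg_exp k (bideg_hermitian _ _ _ _); rewrite !mul1n.
Qed.

Lemma horner2_slash_Pk a b c e (E : hform -> hform) z w :
  c * z + e != 0 -> c^* * w + e^* != 0 ->
  (forall q, form_slash om a b c e q z w = form_eval om (E q) z w) ->
  horner2 (slash k P (mx2 a b c e)) z w = \sum_(q <- S) form_eval om (E q) z w ^+ k.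
Proof.
move=> nz_z nz_w slashE; have [aE bE cE eE] := mx2E a b c e.
have := horner2_slash (g := mx2 a b c e) (z := z) (w := w) bideg_Pk.
rewrite /= aE bE cE eE => -> //.
rewrite horner2_Pk // mulr_sumr; apply: eq_bigr => q _.
by rewrite -slashE /form_slash !exprMn.
Qed.

Lemma horner2_slash1_Pk z w :
  horner2 (slash k P 1%:M) z w = \sum_(q <- S) form_eval om q z w ^+ k.
Proof.
rewrite mx2_1 (horner2_slash_Pk (E := id)) ?rmorph0 ?rmorph1 ?mul0r ?add0r ?oner_eq0 //.
by move=> q; apply: (form_slash1 om_conj).
Qed.

Lemma normf_neq_Delta : ~ (exists beta : C, in_Od d beta /\ D%:R = beta * beta^*) ->
  forall x y, normf t n x y != D%:Z.
Proof.
move=> not_norm x y; apply/negP => /eqP normD; apply: not_norm.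
exists (form_b om (0, x, y, 0)); split; first by exists x, y.
by rewrite (form_b_norm om_conj om_sqr) /= normD.
Qed.

Hypothesis k_odd : odd k.

Lemma form_eval_opp_exp z w :
  {morph (fun q => form_eval om q z w ^+ k) : q / opp_form q >-> - q}.
Proof. by move=> q; rewrite /= (form_eval_opp om_conj) exprNn -signr_odd k_odd mulN1r. Qed.

Lemma Pk_slash_S : slash k P 1%:M + slash k P (mat_S C) = 0.
Proof.
apply: (horner2_eq0_off_roots (f := 'X) (g := 'X)); rewrite ?polyX_eq0 // => z w.
rewrite !hornerX => nz_z nz_w.
rewrite horner2D horner2_slash1_Pk (horner2_slash_Pk (E := fun q => opp_form (swap_form t q)));
  rewrite ?rmorph0 ?rmorph1 ?mul1r ?addr0 //; last by move=> q; apply: (form_slash_S om_conj).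
exact: (sum_opp_swap_form D t01 n_ge1 (form_eval_opp_exp z w)).
Qed.

Hypothesis not_norm : ~ (exists beta : C, in_Od d beta /\ D%:R = beta * beta^*).

Lemma Pk_slash_TSe :
  slash k P 1%:M + slash k P (mat_T C *m mat_S C *m mat_eps C) - slash k P (mat_T C) = 0.
Proof.
have -> : mat_T C *m mat_S C *m mat_eps C = mx2 (-1) (-1) (-1) 0.
  by rewrite /mat_T /mat_S /mat_eps !mx2_mul; congr mx2; ring.
apply: (horner2_eq0_off_roots (f := 'X) (g := 'X)); rewrite ?polyX_eq0 // => z w.
rewrite !hornerX => nz_z nz_w.
rewrite horner2B horner2D horner2_slash1_Pk (horner2_slash_Pk (E := TSe_form t));
  rewrite ?rmorph0 ?rmorphN1 ?mulN1r ?addr0 ?oppr_eq0 //;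
  last by move=> q; apply: (form_slash_TSe om_conj).
rewrite /mat_T (horner2_slash_Pk (E := T_form t));
  rewrite ?rmorph0 ?rmorph1 ?mul0r ?add0r ?oner_eq0 //;
  last by move=> q; apply: (form_slash_T om_conj).
exact: (sum_T_TSe_form t01 n_ge1 (normf_neq_Delta not_norm) (form_eval_opp_exp z w)).
Qed.

End Main.

Lemma Pk7_slash_Tw (C : numClosedFieldType) (D k : nat) : odd k ->
  ~ (exists beta : C, in_Od 7 beta /\ D%:R = beta * beta^*) ->
  let P := Pk C 7 D k in
  let Tw := mx2 1 ((1 + sqrtm C 7) / 2) 0 1 in
  slash k P 1%:M - slash k P Tw - slash k P (mat_S C *m invmx (mat_T C) *m Tw *m mat_S C)
  - slash k P (mat_T C *m invmx Tw *m mat_S C *m Tw) = 0.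
Proof.
move=> k_odd not_norm P Tw.
have d_in : (7 \in [:: 1; 2; 3; 7; 11])%N by [].
have [om_conj om_sqr] := omega_d_minpoly C d_in.
set om := omega_d C 7 in om_conj om_sqr.
have -> : Tw = mx2 1 om 0 1 by [].
have -> : invmx (mat_T C) = mx2 1 (-1) 0 1.
  by apply: invmx_mx2; rewrite /mat_T mx2_mul mx2_1; congr mx2; ring.
have -> : invmx (mx2 1 om 0 1) = mx2 1 (- om) 0 1.
  by apply: invmx_mx2; rewrite mx2_mul mx2_1; congr mx2; ring.
have om_conj7 : om^* = 1%:~R - om := om_conj.
have om_sqr7 : om ^+ 2 = 1%:~R * om - 2%:~R := om_sqr.
have -> : mat_S C *m mx2 1 (-1) 0 1 *m mx2 1 om 0 1 *m mat_S C = mx2 (-1) 0 (om - 1) (-1).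
  by rewrite /mat_S !mx2_mul; congr mx2; ring.
have -> : mat_T C *m mx2 1 (- om) 0 1 *m mat_S C *m mx2 1 om 0 1 = mx2 (1 - om) 1 1 om.
  by rewrite /mat_T /mat_S !mx2_mul; congr mx2; ring: om_sqr7.
apply: (horner2_eq0_off_roots (f := lin_poly (om - 1) (-1) * lin_poly 1 om)
  (g := lin_poly (om - 1)^* (-1)^* * lin_poly 1^* om^*)).
- by rewrite mulf_neq0 // lin_poly_neq0 // ?oppr_eq0 ?oner_eq0 ?orbT.
- by rewrite mulf_neq0 // lin_poly_neq0 // ?conjC_eq0 ?oppr_eq0 ?oner_eq0 ?orbT.
move=> z w; rewrite !hornerM !horner_lin_poly !mulf_eq0 !negb_or.
move=> /andP[nz_z3 nz_z4] /andP[nz_w3 nz_w4].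
rewrite !horner2B horner2_slash1_Pk //.
rewrite (horner2_slash_Pk D k d_in (E := Tw_form));
  rewrite ?rmorph0 ?rmorph1 ?mul0r ?add0r ?oner_eq0 //;
  last by move=> q; apply: (form_slash_Tw om_conj7 om_sqr7).
rewrite (horner2_slash_Pk D k d_in (E := STiTwS_form)) //;
  last by move=> q; apply: (form_slash_STiTwS om_conj7 om_sqr7).
rewrite (horner2_slash_Pk D k d_in (E := TTwiSTw_form)) //;
  last by move=> q; apply: (form_slash_TTwiSTw om_conj7 om_sqr7).
exact: (sum_Tw_forms (normf_neq_Delta d_in not_norm) (form_eval_opp_exp d_in k_odd z w)).
Qed.

Unset Implicit Arguments.

Theorem proposition2p8 (C : numClosedFieldType) (d Delta k : nat) :
  d \in [:: 1; 2; 3; 7; 11]%N ->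
  (0 < Delta)%N ->
  ~ (exists beta : C, in_Od d beta /\ Delta%:R = beta * beta^*) ->
  odd k ->
  let P := Pk C d Delta k in
  [/\ eval2 P (Wv C) (Zv C) = P,
      (forall u : C, unit_Od d u ->
         eval2 P (cst u * Zv C) (cst u^* * Wv C) = P),
      slash k P 1%:M + slash k P (mat_S C) = 0,
      slash k P 1%:M + slash k P (mat_T C *m mat_S C *m mat_eps C)
        - slash k P (mat_T C) = 0 &
      (d = 7%N ->
         let w : C := (1 + sqrtm C 7) / 2 in
         let Tw := mx2 1 w 0 1 in
         slash k P 1%:M - slash k P Tw
         - slash k P (mat_S C *m invmx (mat_T C) *m Tw *m mat_S C)
         - slash k P (mat_T C *m invmx Tw *m mat_S C *m Tw) = 0)].
Proof.
move=> d_in _ not_norm k_odd P; split.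
- exact: Pk_conj_sym.
- exact: Pk_unit_invariant.
- exact: Pk_slash_S.
- exact: Pk_slash_TSe.
- by move=> d7; subst d; exact: Pk7_slash_Tw.
Qed.
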